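(* Let $(\Omega,\mathcal G,\mathbb P)$ be a probability space, $\mathcal F=(\mathcal F_t)_{t\in[0,\infty)}$ a filtration with $\mathcal F_\infty\subset\mathcal G$, and $X$ an $\mathbb R^d$-valued Lévy process relative to $\mathcal F$. If $\mathcal G=\sigma(X)$, then $\mathcal G\otimes\mathcal B_{[0,\infty)}=\mathcal O\vee\sigma_{\Omega\times[0,\infty)}(\blacktriangle X)$. If $\mathcal G=\sigma(X)$ only up to $\mathbb P$-negligible sets, then this equality holds up to evanescent sets.
   Context: $X$ is a Lévy process relative to $\mathcal F$: $\mathcal F$-adapted, càdlàg, $X_0=0$ a.s., and $X_t-X_s$ independent of $\mathcal F_s$ with the law of $X_{t-s}$ for $s\le t$. $(\mathbb D,\mathcal D)$: càdlàg paths $[0,\infty)\to\mathbb R^d$ with the $\sigma$-field generated by coordinate projections. $\blacktriangle X:\Omega\times[0,\infty)\to\mathbb D$ is $(\omega,t)\mapsto(X_{t+s}(\omega)-X_t(\omega))_{s\ge0}$, and $\sigma_{\Omega\times[0,\infty)}(\blacktriangle X)$ is the $\sigma$-field on $\Omega\times[0,\infty)$ it generates. $\mathcal O$ is the optional $\sigma$-field relative to $\mathcal F$. A set in $\Omega\times[0,\infty)$ is evanescent if its projection on $\Omega$ is contained in a $\mathbb P$-null set. *)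

From HB Require Import structures.
From mathcomp Require Import all_boot all_order all_algebra.
From mathcomp Require Import all_classical all_reals all_analysis.
Set Implicit Arguments. Unset Strict Implicit. Unset Printing Implicit Defensive.
Import Order.TTheory GRing.Theory Num.Theory.
Import numFieldNormedType.Exports.
Local Open Scope classical_set_scope.
Local Open Scope ring_scope.

Section defs.
Context {R : realType}.

Definition borelV (d : nat) : set (set 'rV[R]_d) := <<s [set A | open A] >>.

Definition Tplus : set R := `[0, +oo[%classic.

Definition cadlag (V : topologicalType) (f : R -> V) : Prop :=
  (forall t, 0 <= t -> f x @[x --> t^'+] --> f t) /\
  (forall t, 0 < t -> exists l : V, f x @[x --> t^'-] --> l).

Context {dm : measure_display} {Omega : measurableType dm}.

(* filtration (F_t)_{t >= 0} of sub-sigma-fields of G (so F_oo is in G) *)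
Definition filtration (F : R -> set (set Omega)) : Prop :=
  [/\ forall t, 0 <= t -> sigma_algebra setT (F t),
      forall s t, 0 <= s -> s <= t -> F s `<=` F t &
      forall t, 0 <= t -> F t `<=` measurable].

Definition incr_st (d : nat) (X : R -> Omega -> 'rV[R]_d) (s t : R) :
  Omega -> 'rV[R]_d := fun w => X t w - X s w.

Definition levy_process (P : probability Omega R) (F : R -> set (set Omega))
    (d : nat) (X : R -> Omega -> 'rV[R]_d) : Prop :=
  [/\ (forall t, 0 <= t -> forall B, borelV B -> F t (X t @^-1` B)),
      (forall w, cadlag (fun t => X t w)),
      P.-negligible [set w | X 0 w != 0],
      (forall s t, 0 <= s -> s <= t -> forall A B, F s A -> borelV B ->
         P (A `&` (incr_st X s t @^-1` B)) =
         (P A * P (incr_st X s t @^-1` B))%E) &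
      (forall s t, 0 <= s -> s <= t -> forall B, borelV B ->
         P (incr_st X s t @^-1` B) = P (X (t - s) @^-1` B))].

Definition sigmaX (d : nat) (X : R -> Omega -> 'rV[R]_d) : set (set Omega) :=
  <<s [set X t @^-1` B | t in Tplus & B in borelV (d:=d)] >>.

Definition Dom : set (Omega * R) := [set: Omega] `*` Tplus.

Definition prodGB : set (set (Omega * R)) :=
  <<s Dom, [set A `*` B | A in measurable & B in
             [set B : set R | measurable B /\ B `<=` Tplus]] >>.

Definition adapted (F : R -> set (set Omega)) (Y : R -> Omega -> R) : Prop :=
  forall t, 0 <= t -> forall B : set R, measurable B -> F t (Y t @^-1` B).

Definition optional (F : R -> set (set Omega)) : set (set (Omega * R)) :=
  <<s Dom, [set Dom `&` ((fun p => Y p.2 p.1) @^-1` B) |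
            Y in [set Y | adapted F Y /\ forall w, cadlag (fun t => Y t w)] &
            B in [set B : set R | measurable B]] >>.

Definition Dsigma (d : nat) : set (set (R -> 'rV[R]_d)) :=
  <<s [set [set f | cadlag f] `&` ((fun f => f s) @^-1` B) |
        s in Tplus & B in borelV (d:=d)] >>.

Definition incr (d : nat) (X : R -> Omega -> 'rV[R]_d) (p : Omega * R) :
  R -> 'rV[R]_d := fun s => X (p.2 + s) p.1 - X p.2 p.1.

Definition sigma_incr (d : nat) (X : R -> Omega -> 'rV[R]_d) :
  set (set (Omega * R)) :=
  <<s Dom, [set Dom `&` (incr X @^-1` A) | A in Dsigma (d:=d)] >>.

Definition sjoin (G1 G2 : set (set (Omega * R))) : set (set (Omega * R)) :=
  <<s Dom, G1 `|` G2 >>.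

Definition symdiff (T : Type) (A B : set T) : set T := (A `\` B) `|` (B `\` A).

Definition evanescent (P : probability Omega R) (A : set (Omega * R)) : Prop :=
  P.-negligible [set w | exists t, A (w, t)].

End defs.

From HB Require Import structures.
From mathcomp Require Import all_boot all_order all_algebra.
From mathcomp Require Import all_classical all_reals all_analysis.
Import Order.TTheory GRing.Theory Num.Theory.
Import numFieldNormedType.Exports.
Local Open Scope classical_set_scope.
Local Open Scope ring_scope.
Set Implicit Arguments. Unset Strict Implicit.

(* Every right-continuous process whose time sections are G-measurable is
   G (x) B-measurable: evaluate it along the grid (n+1)^-1 N approaching each
   time from above.  Optional processes and the increments
   (w, t) |-> X_(t+s)(w) - X_t(w) are of this kind, whence the inclusion of the
   join in the product.  Conversely, for A in sigma(X) the rectangle A x C is in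
   the join because (w, s) |-> X_t(w) is: from s = t on it is the optional
   process X_t 1_[t, oo), and before t it is the right limit of
   X_s + (X_(s+u) - X_s) as the lag u decreases to t - s, a sum of an optional
   process and an increment.  If G = sigma(X) only up to null sets, replacing A
   by B in sigma(X) with A (+) B negligible moves A x C by an evanescent set, and
   the sets that are a join set up to an evanescent set form a sigma-field. *)

Section trace.
Context {T : pointedType} (D : set T) (S : set (set T)).
Hypothesis sS : sigma_algebra D S.

(* [S] is a sigma-field on [D] only; its trace on the whole type is a measurable
   structure in which S-measurability reads [measurable_fun D]. *)
Definition trace_type := g_sigma_algebraType [set A : set T | S (D `&` A)].

Lemma measurable_traceE (A : set T) : measurable (A : set trace_type) = S (D `&` A).
Proof.
suff -> : @measurable _ trace_type = [set A : set T | S (D `&` A)] by [].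
apply: sigma_algebra_id; exact: (@sigma_algebra_image _ _ D idfun S).
Qed.

Lemma measurable_trace_dom : measurable (D : set trace_type).
Proof.
rewrite measurable_traceE setIid -(setD0 D).
by case: sS => S0 SD _; exact: SD.
Qed.

Lemma measurable_fun_traceP d' (T' : measurableType d') (f : trace_type -> T') :
  measurable_fun (D : set trace_type) f <->
  forall B, measurable B -> S (D `&` f @^-1` B).
Proof.
split=> [mf B mB|Sf _ B mB].
  by have := mf measurable_trace_dom B mB; rewrite measurable_traceE setIA setIid.
by rewrite measurable_traceE setIA setIid; exact: Sf.
Qed.

End trace.

Section borel_rV.
Context {R : realType} (n : nat).
Implicit Types (U : set 'rV[R]_n) (q : 'rV[rat]_n * rat).

Lemma borelV_coord_preimage (j : 'I_n) (C : set R) : measurable C ->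
  borelV ((fun M : 'rV[R]_n => M ord0 j) @^-1` C).
Proof.
pose coord := fun M : 'rV[R]_n => M ord0 j.
suff : measurable `<=` image_set_system setT coord (@borelV R n).
  by move=> + mC => /(_ C mC); rewrite /image_set_system /= setTI.
move=> V mV; have : (@measurable_realfun.RGenOpens.G R).-sigma.-measurable V.
  by rewrite -measurable_realfun.RGenOpens.measurableE.
move: V {mV}; apply: smallest_sub.
  by apply: sigma_algebra_image; exact: smallest_sigma_algebra.
move=> _ [a [b ->]]; rewrite /image_set_system /= setTI; apply: sub_sigma_algebra.
apply: (proj1 (@continuousP _ _ coord) (@coord_continuous R 1 n ord0 j)).
exact: interval_open.
Qed.

Let rat_ball q : set 'rV[R]_n := ball (map_mx ratr q.1 : 'rV[R]_n) (ratr q.2 : R).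

Lemma open_rV_bigcup_rat_balls U : open U ->
  U = \bigcup_(q in [set q | rat_ball q `<=` U]) rat_ball q.
Proof.
move=> oU; apply/seteqP; split => [x Ux|y [q Uq]]; last exact: Uq.
have /nbhs_ballP [e e0 eU] := oU x Ux.
have [r] := @rat_in_itvoo R 0 (e / 2) ltac:(by rewrite divr_gt0).
rewrite in_itv /= => /andP[r0 re].
have /choice [c cx] : forall j, exists q : rat, ball (x ord0 j) (ratr r) (ratr q).
  move=> j; have /rat_in_itvoo[q] : x ord0 j - ratr r < x ord0 j + ratr r.
    by rewrite ltrBlDr -addrA ltrDl addr_gt0.
  by rewrite in_itv /= => /andP[q1 q2]; exists q; rewrite -ball_normE /= ltr_distlC q1.
have xc : rat_ball (\row_j c j, r) x.
  split=> // i j; rewrite (ord1 i) !mxE; exact/ball_sym/cx.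
exists (\row_j c j, r) => //= y cy; apply: eU.
apply: (@le_ball _ _ _ (ratr r + ratr r)).
  by rewrite -mulr2n -mulr_natr -ler_pdivlMr // ltW.
exact: ball_triangle (ball_sym xc) cy.
Qed.

Lemma measurable_preimage_borelV d' (T : measurableType d') (D : set T)
    (h : T -> 'rV[R]_n) :
  measurable D -> (forall j, measurable_fun D (fun x => h x ord0 j)) ->
  forall B, borelV B -> measurable (D `&` h @^-1` B).
Proof.
move=> mD mh; suff : @borelV R n `<=` image_set_system D h measurable by exact.
apply: smallest_sub.
  apply: sigma_algebra_image; split=> [|A|A].
  - exact: measurable0.
  - exact: measurableD.
  - exact: bigcupT_measurable.
move=> U oU; rewrite /image_set_system /= (open_rV_bigcup_rat_balls oU).
rewrite bigcup_mkcond preimage_bigcup setI_bigcupr.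
apply: countable_bigcupT_measurable; first exact: countableP.
move=> q; case: ifPn => _; last by rewrite preimage_set0 setI0.
have [r0|r0] := ltP 0 (ratr q.2 : R); last first.
  suff -> : rat_ball q = set0 by rewrite preimage_set0 setI0.
  by apply/seteqP; split => // y [] /=; rewrite ltNge r0.
rewrite (_ : _ `&` _ = D `&` \bigcap_(j in setT)
    (D `&` (fun x => h x ord0 j) @^-1` ball (ratr (q.1 ord0 j) : R) (ratr q.2))).
  apply: measurableI => //; apply: fin_bigcap_measurable; first exact: finite_finset.
  move=> j _; apply: mh => //; apply: measurable_realfun.open_measurable.
  exact: ball_open.
apply/seteqP; split=> [y [Dy [_ hy]]|y [Dy hy]].
  by split => // j _; split => //; have := hy ord0 j; rewrite mxE.
by split => //; split => // i j; rewrite (ord1 i) mxE; have [] := hy j.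
Qed.

End borel_rV.

Lemma trace_preimage_borelV {R : realType} {T : pointedType} (D : set T)
    (S : set (set T)) n (h : T -> 'rV[R]_n) : sigma_algebra D S ->
  (forall j, measurable_fun (D : set (trace_type D S)) (fun x => h x ord0 j)) ->
  forall B, borelV B -> S (D `&` h @^-1` B).
Proof.
move=> sS mh B BB; have := measurable_preimage_borelV (measurable_trace_dom sS) mh BB.
by rewrite (measurable_traceE sS) setIA setIid.
Qed.

Section grid.
Context {R : realType}.
Implicit Types (n k : nat) (s : R).

Definition grid_above n s : R :=
  (Num.floor (s * n.+1%:R) + 1)%:~R / n.+1%:R.

Lemma grid_above_gt n s : s < grid_above n s.
Proof.
have /andP[_ +] := Num.Theory.floor_itv (s * n.+1%:R).
by rewrite /grid_above ltr_pdivlMr.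
Qed.

Lemma grid_above_le n s : grid_above n s <= s + n.+1%:R^-1.
Proof.
have /andP[+ _] := Num.Theory.floor_itv (s * n.+1%:R).
rewrite /grid_above ler_pdivrMr // mulrDl mulVf ?pnatr_eq0 //.
by rewrite intrD lerD2r.
Qed.

Lemma grid_above_cell n k s :
  s \in `[k%:R / n.+1%:R, k.+1%:R / n.+1%:R[ -> grid_above n s = k.+1%:R / n.+1%:R.
Proof.
rewrite in_itv /= => /andP[ks sk]; rewrite /grid_above (@Num.Theory.floor_def _ _ k).
  by rewrite intrD pmulrn -natr1.
by rewrite intrD pmulrn -ler_pdivrMr // -ltr_pdivlMr // ks natr1.
Qed.

Lemma grid_cell_exists n s : 0 <= s ->
  exists k, s \in `[k%:R / n.+1%:R, k.+1%:R / n.+1%:R[.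
Proof.
move=> s0; have /andP[sk ks] := Num.Theory.floor_itv (s * n.+1%:R).
have : 0 <= Num.floor (s * n.+1%:R) by rewrite Num.Theory.floor_ge0 mulr_ge0.
case: (Num.floor _) sk ks => [k|//] sk ks _; exists k.
by rewrite intrD in ks; rewrite in_itv /= ler_pdivrMr // ltr_pdivlMr // sk -(natr1 k).
Qed.

Lemma cvg_grid_above (V : topologicalType) (f : R -> V) s (l : V) :
  f x @[x --> s^'+] --> l -> f (grid_above n s) @[n --> \oo] --> l.
Proof.
apply: cvg_comp => A /= sA.
have grid_cvg : grid_above n s @[n --> \oo] --> s.
  apply/cvgrPdist_le => e e0; near=> n.
  have ne : n.+1%:R^-1 <= e.
    by apply: ltW; near: n; exact: near_infty_natSinv_lt (PosNum e0).
  have gt := grid_above_gt n s; have le := grid_above_le n s.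
  rewrite ler_norml lerNl opprB lerBlDl (le_trans le) ?lerD2l //=.
  by rewrite (le_trans _ (ltW e0)) // subr_le0 ltW.
have : \forall n \near \oo, s < grid_above n s -> A (grid_above n s).
  exact: grid_cvg _ sA.
by apply: filterS => n; apply; exact: grid_above_gt.
Unshelve. all: by end_near. Qed.

End grid.

Lemma measurable_fun_right_continuous_eval {R : realType} d (T : measurableType d)
    (D : set T) (Z : R -> T -> R) (tau : T -> R) :
  measurable D -> measurable_fun D tau -> (forall x, D x -> 0 <= tau x) ->
  (forall u, 0 <= u -> measurable_fun D (Z u)) ->
  (forall x, D x -> Z u x @[u --> (tau x)^'+] --> Z (tau x) x) ->
  measurable_fun D (fun x => Z (tau x) x).
Proof.
move=> mD mtau tau0 mZ Zrc.
apply: (@measurable_realfun.measurable_fun_cvg _ _ _ D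
  (fun n x => Z (grid_above n (tau x)) x)); last first.
  by move=> x Dx; exact: cvg_grid_above (Zrc x Dx).
move=> n _ B mB.
have -> : D `&` (fun x => Z (grid_above n (tau x)) x) @^-1` B =
    \bigcup_k ((D `&` tau @^-1` `[k%:R / n.+1%:R, k.+1%:R / n.+1%:R[) `&`
               (D `&` Z (k.+1%:R / n.+1%:R) @^-1` B)).
  apply/seteqP; split=> [x [Dx ZB]|x [k _ [[Dx /= tauk] [_ ZB]]]].
    have [k tauk] := grid_cell_exists n (tau0 x Dx).
    by exists k => //; split; split => //=; rewrite -(grid_above_cell tauk).
  by split => //=; rewrite (grid_above_cell tauk).
apply: bigcupT_measurable => k; apply: measurableI.
  by apply: mtau => //; exact: measurable_itv.
by apply: mZ => //; rewrite divr_ge0.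
Qed.

Section cadlag.
Context {R : realType}.

Lemma cvg_at_right_shift (V : topologicalType) (f : R -> V) (a u : R) (l : V) :
  f x @[x --> (a + u)^'+] --> l -> f (a + x) @[x --> u^'+] --> l.
Proof.
apply: cvg_comp => A /= /nbhs_ballP [e e0 eA].
apply/nbhs_ballP; exists e => // x ux xu; apply: eA; last by rewrite ltrD2l.
by move: ux; rewrite -!ball_normE /= opprD addrACA subrr add0r.
Qed.

Lemma cvg_at_left_shift (V : topologicalType) (f : R -> V) (a u : R) (l : V) :
  f x @[x --> (a + u)^'-] --> l -> f (a + x) @[x --> u^'-] --> l.
Proof.
apply: cvg_comp => A /= /nbhs_ballP [e e0 eA].
apply/nbhs_ballP; exists e => // x ux xu; apply: eA; last by rewrite ltrD2l.
by move: ux; rewrite -!ball_normE /= opprD addrACA subrr add0r.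
Qed.

Lemma cadlag_continuous_comp (V W : topologicalType) (g : V -> W) (f : R -> V) :
  continuous g -> cadlag f -> cadlag (g \o f).
Proof.
move=> cg [rc ll]; split=> [t t0|t t0]; first exact: continuous_cvg _ (cg _) (rc t t0).
by have [l fl] := ll t t0; exists (g l); exact: continuous_cvg _ (cg _) fl.
Qed.

Lemma cadlag_increment (V : normedModType R) (f : R -> V) (s : R) :
  0 <= s -> cadlag f -> cadlag (fun u => f (s + u) - f s).
Proof.
move=> s0 [rc ll]; split=> [t t0|t t0].
  apply: cvgB; last exact: cvg_cst.
  by apply: cvg_at_right_shift; apply: rc; rewrite addr_ge0.
have [l fl] := ll (s + t) (ltr_wpDl s0 t0).
by exists (l - f s); apply: cvgB (cvg_cst _); exact: cvg_at_left_shift.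
Qed.

Lemma cadlag_id : cadlag (fun t : R => t).
Proof.
split=> [t _|t _]; first exact/cvg_at_right_filter/cvg_id.
by exists t; exact/cvg_at_left_filter/cvg_id.
Qed.

Lemma cadlag_step (V : topologicalType) (t : R) (a b : V) :
  cadlag (fun s => if t <= s then a else b).
Proof.
split=> [s _|s _].
  apply: cvg_near_cst; have [ts|st] := leP t s.
    by near=> x; rewrite ifT // (le_trans ts) //; near: x; exact: nbhs_right_ge.
  near=> x; rewrite ifF //; apply/negbTE; rewrite -ltNge.
  by near: x; exact: nbhs_right_lt.
have [ts|st] := ltP t s.
  exists a; apply: cvg_near_cst; near=> x; rewrite ifT //; apply: ltW.
  by near: x; exact: nbhs_left_gt.
exists b; apply: cvg_near_cst; near=> x; rewrite ifF //; apply/negbTE.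
by rewrite -ltNge; apply: lt_le_trans st; near: x; exact: nbhs_left_lt.
Unshelve. all: by end_near. Qed.

End cadlag.

Section filtration.
Context {R : realType} {dm : measure_display} {Omega : measurableType dm}.
Variable F : R -> set (set Omega).
Hypothesis hF : filtration F.

Lemma filtration_measurable t : 0 <= t -> F t `<=` measurable.
Proof. by case: hF => _ _; apply. Qed.

Lemma filtration_const t (P : Prop) : 0 <= t -> F t [set _ | P].
Proof.
case: hF => + _ _ => /[apply] -[F0 FC _].
have [p|np] := pselect P.
  rewrite (_ : [set _ | P] = setT `\` set0); first exact: FC.
  by rewrite setD0; apply/seteqP; split.
by rewrite (_ : [set _ | P] = set0) //; apply/seteqP; split.
Qed.

Lemma adapted_time : adapted F (fun t _ => t).
Proof. by move=> t t0 B _; exact: filtration_const. Qed.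

Lemma adapted_step (Y : R -> Omega -> R) (t : R) : adapted F Y -> 0 <= t ->
  adapted F (fun s w => if t <= s then Y t w else 0).
Proof.
move=> aY t0 s s0 B mB; have [ts|ts] := boolP (t <= s).
  by case: hF => _ + _ => /(_ t s t0 ts); apply; exact: aY.
rewrite (_ : _ @^-1` B = [set _ | B 0]); first exact: filtration_const.
by apply/seteqP; split.
Qed.

Lemma adapted_coord n (X : R -> Omega -> 'rV[R]_n) (j : 'I_n) :
  (forall t, 0 <= t -> forall B, borelV B -> F t (X t @^-1` B)) ->
  adapted F (fun t w => X t w ord0 j).
Proof. by move=> Xad t t0 B mB; exact: Xad (borelV_coord_preimage j mB). Qed.

End filtration.

Section domain.
Context {R : realType} {dm : measure_display} {Omega : measurableType dm}.
Local Notation Dom := (@Dom R dm Omega).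

Lemma TplusE (s : R) : Tplus s = (0 <= s).
Proof. by rewrite /Tplus /= in_itv /= andbT. Qed.

Lemma sigma_algebra_sjoin (G1 G2 : set (set (Omega * R))) :
  sigma_algebra Dom (sjoin G1 G2).
Proof. exact: smallest_sigma_algebra. Qed.

Lemma sub_sjoinl (G1 G2 : set (set (Omega * R))) : G1 `<=` sjoin G1 G2.
Proof. by move=> A G1A; apply: sub_sigma_algebra; left. Qed.

Lemma sub_sjoinr (G1 G2 : set (set (Omega * R))) : G2 `<=` sjoin G1 G2.
Proof. by move=> A G2A; apply: sub_sigma_algebra; right. Qed.

Lemma sjoin_sub (G1 G2 S : set (set (Omega * R))) : sigma_algebra Dom S ->
  G1 `<=` S -> G2 `<=` S -> sjoin G1 G2 `<=` S.
Proof.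
by move=> sS G1S G2S; apply: smallest_sub => // A []; [exact: G1S|exact: G2S].
Qed.

Lemma sigma_algebra_prodGB : sigma_algebra Dom (@prodGB R dm Omega).
Proof. exact: smallest_sigma_algebra. Qed.

Lemma prodGB_rect (A : set Omega) (C : set R) :
  measurable A -> measurable C -> C `<=` Tplus -> prodGB (A `*` C).
Proof. by move=> mA mC CT; apply: sub_sigma_algebra; exists A => //; exists C. Qed.

End domain.

Section product_contains_join.
Context {R : realType} {dm : measure_display} {Omega : measurableType dm}.
Local Notation Dom := (@Dom R dm Omega).
Local Notation PG := (trace_type Dom (@prodGB R dm Omega)).

Lemma measurable_fun_prodGB_fst (f : Omega -> R) :
  measurable_fun setT f -> measurable_fun (Dom : set PG) (fun p => f p.1).
Proof.
move=> mf; apply/(measurable_fun_traceP sigma_algebra_prodGB) => B mB.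
rewrite (_ : _ `&` _ = f @^-1` B `*` Tplus).
  apply: prodGB_rect => //; last exact: measurable_itv.
  by rewrite -[X in measurable X]setTI; exact: mf.
by apply/seteqP; split=> [[w s] [[_ ?] ?]|[w s] [? ?]].
Qed.

Lemma measurable_fun_prodGB_snd : measurable_fun (Dom : set PG) snd.
Proof.
apply/(measurable_fun_traceP sigma_algebra_prodGB) => B mB.
rewrite (_ : _ `&` _ = setT `*` (Tplus `&` B)).
  by apply: prodGB_rect => //; apply: measurableI => //; exact: measurable_itv.
by apply/seteqP; split=> [[w s] [[_ ?] ?]|[w s] [_ [? ?]]].
Qed.

Lemma measurable_fun_prodGB_right_continuous (Y : R -> Omega -> R) :
  (forall w t, 0 <= t -> Y u w @[u --> t^'+] --> Y t w) ->
  (forall t, 0 <= t -> measurable_fun setT (Y t)) ->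
  measurable_fun (Dom : set PG) (fun p => Y p.2 p.1).
Proof.
move=> Yrc mY.
apply: (@measurable_fun_right_continuous_eval R _ PG Dom (fun u p => Y u p.1) snd).
- exact: measurable_trace_dom sigma_algebra_prodGB.
- exact: measurable_fun_prodGB_snd.
- by move=> [w s] [_]; rewrite TplusE.
- by move=> u u0; apply: measurable_fun_prodGB_fst; exact: mY.
- by move=> [w s] [_]; rewrite TplusE; exact: Yrc.
Qed.

Lemma optional_sub_prodGB (F : R -> set (set Omega)) :
  filtration F -> optional F `<=` prodGB.
Proof.
move=> hF; apply: smallest_sub; first exact: sigma_algebra_prodGB.
move=> _ [Y [aY cY] [B mB <-]].
suff : measurable_fun (Dom : set PG) (fun p => Y p.2 p.1).
  by move/(measurable_fun_traceP sigma_algebra_prodGB); apply.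
apply: measurable_fun_prodGB_right_continuous => [w t t0|t t0 _ C mC].
  exact: (cY w).1.
by rewrite setTI; apply: (filtration_measurable hF t0); exact: aY.
Qed.

Variables (n : nat) (X : R -> Omega -> 'rV[R]_n).
Hypothesis Xc : forall w, cadlag (fun t => X t w).

Lemma Dom_incr_preimage (s : R) (B : set 'rV[R]_n) : 0 <= s ->
  Dom `&` incr X @^-1` ([set f | cadlag f] `&` (fun f => f s) @^-1` B) =
  Dom `&` (fun p => incr X p s) @^-1` B.
Proof.
move=> s0; apply/seteqP; split=> [[w t] [Dp [_ ?]]|[w t] [Dp ?]]; first by split.
split=> //; split=> //; apply: cadlag_increment (Xc w).
by case: Dp => _; rewrite TplusE.
Qed.

Lemma sigma_incr_sub_prodGB :
  (forall t j, 0 <= t -> measurable_fun setT (fun w => X t w ord0 j)) ->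
  sigma_incr X `<=` prodGB.
Proof.
move=> mX; apply: smallest_sub; first exact: sigma_algebra_prodGB.
move=> _ [A DA <-].
suff : @Dsigma R n `<=` image_set_system Dom (incr X) prodGB by exact.
apply: smallest_sub; first exact: (sigma_algebra_image _ sigma_algebra_prodGB).
move=> _ [s s0 [B BB <-]]; rewrite TplusE in s0.
rewrite /image_set_system /= Dom_incr_preimage //.
apply: trace_preimage_borelV BB; first exact: sigma_algebra_prodGB.
move=> j; have -> : (fun p => incr X p s ord0 j) =
    (fun p => X (s + p.2) p.1 ord0 j - X p.2 p.1 ord0 j).
  by apply: funext => p; rewrite /incr !mxE (addrC p.2).
have Xrc w t : 0 <= t -> X u w ord0 j @[u --> t^'+] --> X t w ord0 j.
  exact: (cadlag_continuous_comp (@coord_continuous R 1 n ord0 j) (Xc w)).1.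
apply: measurable_realfun.measurable_funB.
  apply: (@measurable_fun_prodGB_right_continuous (fun t w => X (s + t) w ord0 j)).
    move=> w t t0; apply: (cvg_at_right_shift (f := fun x => X x w ord0 j)).
    by apply: Xrc; rewrite addr_ge0.
  by move=> t t0; apply: mX; rewrite addr_ge0.
apply: (@measurable_fun_prodGB_right_continuous (fun t w => X t w ord0 j)) => //.
by move=> t t0; exact: mX.
Qed.

End product_contains_join.

Section join_contains_product.
Context {R : realType} {dm : measure_display} {Omega : measurableType dm}.
Variables (F : R -> set (set Omega)) (n : nat) (X : R -> Omega -> 'rV[R]_n).
Hypothesis hF : filtration F.
Hypothesis Xad : forall t, 0 <= t -> forall B, borelV B -> F t (X t @^-1` B).
Hypothesis Xc : forall w, cadlag (fun t => X t w).

Local Notation Dom := (@Dom R dm Omega).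
Local Notation J := (sjoin (optional F) (sigma_incr X)).
Local Notation JT := (trace_type Dom J).

Let sJ : sigma_algebra Dom J := sigma_algebra_sjoin _ _.
Let mDom : measurable (Dom : set JT) := measurable_trace_dom sJ.

Lemma measurable_fun_sjoin_optional (Y : R -> Omega -> R) :
  adapted F Y -> (forall w, cadlag (fun t => Y t w)) ->
  measurable_fun (Dom : set JT) (fun p => Y p.2 p.1).
Proof.
move=> aY cY; apply/(measurable_fun_traceP sJ) => B mB.
apply: sub_sjoinl; apply: sub_sigma_algebra.
by exists Y => //; exists B.
Qed.

Lemma measurable_fun_sjoin_snd : measurable_fun (Dom : set JT) snd.
Proof.
apply: (measurable_fun_sjoin_optional (adapted_time hF)) => w.
exact: cadlag_id.
Qed.

Lemma measurable_fun_sjoin_coord (j : 'I_n) :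
  measurable_fun (Dom : set JT) (fun p => X p.2 p.1 ord0 j).
Proof.
apply: (measurable_fun_sjoin_optional (adapted_coord j Xad)) => w.
exact: cadlag_continuous_comp (@coord_continuous R 1 n ord0 j) (Xc w).
Qed.

Lemma measurable_fun_sjoin_step (t : R) (j : 'I_n) : 0 <= t ->
  measurable_fun (Dom : set JT) (fun p => if t <= p.2 then X t p.1 ord0 j else 0).
Proof.
move=> t0; have := adapted_step hF (adapted_coord j Xad) t0.
by move/measurable_fun_sjoin_optional; apply=> w; exact: cadlag_step.
Qed.

Lemma measurable_fun_sjoin_incr (u : R) (j : 'I_n) : 0 <= u ->
  measurable_fun (Dom : set JT) (fun p => incr X p u ord0 j).
Proof.
move=> u0; apply/(measurable_fun_traceP sJ) => B mB.
rewrite (_ : _ `&` _ = Dom `&` (fun p => incr X p u) @^-1`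
    ((fun M : 'rV[R]_n => M ord0 j) @^-1` B)) // -(Dom_incr_preimage Xc _ u0).
apply: sub_sjoinr; apply: sub_sigma_algebra; eexists => //.
apply: sub_sigma_algebra; exists u; first by rewrite TplusE.
exists ((fun M : 'rV[R]_n => M ord0 j) @^-1` B) => //.
exact: borelV_coord_preimage.
Qed.

Lemma measurable_fun_sjoin_shift (u : R) (j : 'I_n) : 0 <= u ->
  measurable_fun (Dom : set JT) (fun p => X (p.2 + u) p.1 ord0 j).
Proof.
move=> u0; have -> : (fun p => X (p.2 + u) p.1 ord0 j) =
    (fun p => X p.2 p.1 ord0 j + incr X p u ord0 j).
  by apply: funext => p; rewrite /incr !mxE addrCA subrr addr0.
apply: measurable_realfun.measurable_funD; first exact: measurable_fun_sjoin_coord.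
exact: measurable_fun_sjoin_incr.
Qed.

Lemma measurable_sjoin_time (C : set R) : measurable C ->
  measurable (Dom `&` [set p | C p.2] : set JT).
Proof. by move=> mC; exact: measurable_fun_sjoin_snd. Qed.

Lemma measurable_fun_sjoin_fixed_time (t : R) (j : 'I_n) : 0 <= t ->
  measurable_fun (Dom : set JT) (fun p => X t p.1 ord0 j).
Proof.
move=> t0; have mbefore := measurable_sjoin_time (measurable_itv `]-oo, t[).
have mafter := measurable_sjoin_time (measurable_itv `[t, +oo[).
rewrite [X in measurable_fun X](_ : _ = Dom `&` [set p | p.2 \in `]-oo, t[] `|`
                                         Dom `&` [set p | p.2 \in `[t, +oo[]); last first.
  rewrite -setIUr (_ : _ `|` _ = setT) ?setIT //; apply/seteqP; split => // p _.
  by rewrite /= !in_itv /= andbT; case: ltP; [left|right].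
apply/(measurable_funU _ mbefore mafter); split.
  have -> : (fun p => X t p.1 ord0 j) = (fun p => X (p.2 + (t - p.2)) p.1 ord0 j).
    by apply: funext => p; rewrite addrC subrK.
  apply: (@measurable_fun_right_continuous_eval R _ JT _
    (fun u p => X (p.2 + u) p.1 ord0 j) (fun p => t - p.2)) => //.
  - apply: measurable_realfun.measurable_funB => //.
    exact: measurable_funS mDom (@subIsetl _ _ _) measurable_fun_sjoin_snd.
  - by move=> p [_]; rewrite /= in_itv /= subr_ge0 => /ltW.
  - move=> u u0; apply: measurable_funS mDom (@subIsetl _ _ _) _.
    exact: measurable_fun_sjoin_shift.
  move=> [w s] _ /=; apply: (cvg_at_right_shift (f := fun x => X x w ord0 j)).
  rewrite addrC subrK.
  exact: (cadlag_continuous_comp (@coord_continuous R 1 n ord0 j) (Xc w)).1.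
apply: eq_measurable_fun (measurable_funS mDom (@subIsetl _ _ _)
  (measurable_fun_sjoin_step j t0)) => p.
by rewrite inE => -[_]; rewrite /= in_itv /= andbT => ->.
Qed.

Lemma sigmaX_sub_sjoin (A : set Omega) : sigmaX X A -> J (Dom `&` fst @^-1` A).
Proof.
suff : sigmaX X `<=` image_set_system Dom fst J by exact.
apply: smallest_sub; first exact: sigma_algebra_image.
move=> _ [t t0 [B BB <-]]; rewrite TplusE in t0.
apply: (trace_preimage_borelV (h := fun p => X t p.1)) BB => // j.
exact: measurable_fun_sjoin_fixed_time.
Qed.

Lemma sjoin_rect (A : set Omega) (C : set R) :
  sigmaX X A -> measurable C -> C `<=` Tplus -> J (A `*` C).
Proof.
move=> XA mC CT.
have : measurable ((Dom `&` fst @^-1` A) `&` (Dom `&` [set p | C p.2]) : set JT).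
  apply: measurableI; last exact: measurable_sjoin_time.
  by rewrite (measurable_traceE sJ) setIA setIid; exact: sigmaX_sub_sjoin.
rewrite (measurable_traceE sJ); congr J; apply/seteqP; split.
  by move=> [w s] [_ [[_ Aw] [_ Cs]]].
move=> [w s] [Aw Cs]; have Ds : Dom (w, s) by split => //; exact: CT.
by split => //; split; split.
Qed.

End join_contains_product.

Section evanescent.
Context {R : realType} {dm : measure_display} {Omega : measurableType dm}.
Variable P : probability Omega R.
Local Notation Dom := (@Dom R dm Omega).

Lemma evanescentS (A B : set (Omega * R)) :
  A `<=` B -> evanescent P B -> evanescent P A.
Proof. by move=> AB; apply: negligibleS => w [t Awt]; exists t; exact: AB. Qed.

Lemma evanescent_symdiffxx (A : set (Omega * R)) : evanescent P (symdiff A A).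
Proof.
rewrite /evanescent (_ : [set w | _] = set0); first exact: negligible_set0.
by apply/seteqP; split => // w [t [[]|[]]].
Qed.

Lemma evanescent_bigcup (A : (set (Omega * R))^nat) :
  (forall k, evanescent P (A k)) -> evanescent P (\bigcup_k A k).
Proof.
move=> eA; apply: (negligibleS _ (negligible_bigcup eA)).
by move=> w [t [k _ Akw]]; exists k => //; exists t.
Qed.

Lemma evanescent_symdiff_rect (A B : set Omega) (C : set R) :
  P.-negligible (symdiff A B) -> evanescent P (symdiff (A `*` C) (B `*` C)).
Proof.
apply: negligibleS => w [t [[[Aw Ct] nB]|[[Bw Ct] nA]]].
  by left; split => // Bw; apply: nB.
by right; split => // Aw; apply: nA.
Qed.

Lemma sigma_algebra_evanescent_approx (S : set (set (Omega * R))) :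
  sigma_algebra Dom S ->
  sigma_algebra Dom [set A | exists B, S B /\ evanescent P (symdiff A B)].
Proof.
case=> S0 SD SU; split.
- by exists set0; split => //; exact: evanescent_symdiffxx.
- move=> A [B [SB eAB]]; exists (Dom `\` B); split; first exact: SD.
  by apply: evanescentS eAB => p [[[Dp nA] nB]|[[Dp nB] nA]];
    [right|left]; split => //; apply: contrapT => ?; [apply: nB|apply: nA].
- move=> A /choice [B AB]; exists (\bigcup_k B k); split.
    by apply: SU => k; exact: (AB k).1.
  apply: (@evanescentS _ (\bigcup_k symdiff (A k) (B k))); last first.
    by apply: evanescent_bigcup => k; exact: (AB k).2.
  move=> p [[[k _ Akp] nB]|[[k _ Bkp] nA]]; exists k => //.
    by left; split => // Bp; apply: nB; exists k.
  by right; split => // Ap; apply: nA; exists k.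
Qed.

End evanescent.

Theorem lemma3p19 (R : realType) (dm : measure_display) (Omega : measurableType dm)
  (P : probability Omega R) (F : R -> set (set Omega)) (d : nat)
  (X : R -> Omega -> 'rV[R]_d) :
  filtration F -> levy_process P F X ->
  ((measurable = sigmaX X) ->
     prodGB = sjoin (optional F) (sigma_incr X)) /\
  ((forall A, measurable A ->
      exists B, sigmaX X B /\ P.-negligible (symdiff A B)) ->
     (forall A, prodGB A -> exists B, sjoin (optional F) (sigma_incr X) B /\
                 evanescent P (symdiff A B)) /\
     (forall B, sjoin (optional F) (sigma_incr X) B -> exists A, prodGB A /\
                 evanescent P (symdiff A B))).
Proof.
move=> hF [Xad Xc _ _ _].
have mX t j : 0 <= t -> measurable_fun setT (fun w => X t w ord0 j).
  move=> t0 _ B mB; rewrite setTI; apply: (filtration_measurable hF t0).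
  exact: adapted_coord j Xad t t0 B mB.
have J_sub_prodGB : sjoin (optional F) (sigma_incr X) `<=` prodGB.
  apply: sjoin_sub; first exact: sigma_algebra_prodGB.
    exact: optional_sub_prodGB.
  exact: sigma_incr_sub_prodGB.
split=> [GX|approx].
  apply/seteqP; split => //; apply: smallest_sub; first exact: sigma_algebra_sjoin.
  by move=> _ [A mA [C [mC CT] <-]]; apply: sjoin_rect => //; rewrite -GX.
split=> [|B JB]; last first.
  by exists B; split; [exact: J_sub_prodGB|exact: evanescent_symdiffxx].
apply: smallest_sub; first exact/sigma_algebra_evanescent_approx/sigma_algebra_sjoin.
move=> _ [A mA [C [mC CT] <-]]; have [B [XB nAB]] := approx A mA.
exists (B `*` C); split; first exact: sjoin_rect.
exact: evanescent_symdiff_rect.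
Qed.
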